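(* Let $H, W \ge 1$ be integers and $L=HW$. For each $s \in \{0,1,\dots,H+W-2\}$ let $i_{\min}(s)=\max(0,\,s-(W-1))$ and $i_{\max}(s)=\min(s,\,H-1)$. Let $\mathbf{d}^{(s)}$ be the ordered list of points $(i,\,s-i)$ and $\mathbf{a}^{(s)}$ the ordered list of points $(i,\,W-1-(s-i))$, in both cases for $i=i_{\min}(s),\dots,i_{\max}(s)$ in increasing order. Set $\operatorname{diag}(s)=\mathbf{d}^{(s)}$, $\operatorname{antidiag}(s)=\mathbf{a}^{(s)}$ for $s$ even and $\operatorname{diag}(s)=\operatorname{reverse}(\mathbf{d}^{(s)})$, $\operatorname{antidiag}(s)=\operatorname{reverse}(\mathbf{a}^{(s)})$ for $s$ odd. Let $\mathbf{p}_{\text{diag}}$ (resp. $\mathbf{p}_{\text{antidiag}}$) be the concatenation of $\operatorname{diag}(s)$ (resp. $\operatorname{antidiag}(s)$) over $s=0,1,\dots,H+W-2$. Then for each of the four point sequences $\mathbf{p}_{\text{diag}}$, $\mathbf{p}_{\text{antidiag}}$, $\operatorname{reverse}(\mathbf{p}_{\text{diag}})$, $\operatorname{reverse}(\mathbf{p}_{\text{antidiag}})$, any two consecutive points $\mathbf{p},\mathbf{q}$ satisfy $\|\mathbf{q}-\mathbf{p}\|_2 \le \sqrt{2}$.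
   Context: The grid is $\{0,\dots,H-1\}\times\{0,\dots,W-1\}$ with points $(i,j)$. $\operatorname{reverse}$ reverses a finite list; $\|\cdot\|_2$ is the Euclidean norm. These four sequences (flattened to raster indices $iW+j$) form the four rows of the TopoA-Scan forward index tensor. *)

From mathcomp Require Import all_boot all_order all_algebra.
Set Implicit Arguments. Unset Strict Implicit. Unset Printing Implicit Defensive.
Import Order.TTheory GRing.Theory Num.Theory.

(* Grid points (i, j) with 0 <= i < H, 0 <= j < W. *)
Definition point := (nat * nat)%type.

Definition imin (W s : nat) : nat := maxn 0 (s - (W - 1)).
Definition imax (H s : nat) : nat := minn s (H - 1).

Definition irange (H W s : nat) : seq nat :=
  iota (imin W s) ((imax H s).+1 - imin W s).

Definition dseq (H W s : nat) : seq point :=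
  [seq (i, s - i) | i <- irange H W s].
Definition aseq (H W s : nat) : seq point :=
  [seq (i, W - 1 - (s - i)) | i <- irange H W s].

Definition diag (H W s : nat) : seq point :=
  if odd s then rev (dseq H W s) else dseq H W s.
Definition antidiag (H W s : nat) : seq point :=
  if odd s then rev (aseq H W s) else aseq H W s.

Definition p_diag (H W : nat) : seq point :=
  flatten [seq diag H W s | s <- iota 0 (H + W - 1)].
Definition p_antidiag (H W : nat) : seq point :=
  flatten [seq antidiag H W s | s <- iota 0 (H + W - 1)].

Local Open Scope ring_scope.

Definition dist2 (R : rcfType) (p q : point) : R :=
  Num.sqrt ((q.1%:R - p.1%:R) ^+ 2 + (q.2%:R - p.2%:R) ^+ 2).

Definition consecutive_close (R : rcfType) (ps : seq point) : Prop :=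
  forall k : nat, (k.+1 < size ps)%N ->
    dist2 R (nth (0%N, 0%N) ps k) (nth (0%N, 0%N) ps k.+1) <= Num.sqrt 2.

From mathcomp Require Import all_boot all_algebra zify.
Import GRing.Theory Num.Theory.

Set Implicit Arguments.
Unset Strict Implicit.
Unset Printing Implicit Defensive.

(* Consecutive points of both scans are king-adjacent (Chebyshev distance at
   most 1).  Along line s the row i grows by one and the column changes by
   one; between lines s and s + 1 the boustrophedon order leaves line s and
   enters line s + 1 on the same side (both at the row [imin] or both at
   [imax]), and these extreme rows of consecutive lines differ by at most one.
   King-adjacency is symmetric, so it survives reversal, and king-adjacent
   grid points are at Euclidean distance at most sqrt 2. *)

Definition king_adj (p q : point) : bool :=
  [&& p.1 <= q.1.+1, q.1 <= p.1.+1, p.2 <= q.2.+1 & q.2 <= p.2.+1].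

Lemma king_adj_sym : symmetric king_adj.
Proof. by move=> p q; apply/and4P/and4P => -[? ? ? ?]. Qed.

Lemma sqr_natr_sub_le1 (R : numDomainType) (a b : nat) :
  a <= b.+1 -> b <= a.+1 -> ((b%:R - a%:R : R) ^+ 2 <= 1)%R.
Proof.
move=> ab ba; have [->|[->|->]] : b = a \/ b = a.+1 \/ a = b.+1 by lia.
- by rewrite subrr expr0n.
- by rewrite -natr1 addrAC subrr add0r expr1n.
- by rewrite -natr1 opprD addrA subrr add0r sqrrN expr1n.
Qed.

Lemma dist2_le_sqrt2 (R : rcfType) (p q : point) :
  king_adj p q -> (dist2 R p q <= Num.sqrt 2)%R.
Proof.
case/and4P=> h1 h2 h3 h4; rewrite /dist2 ler_sqrt ?ler0n //.
by rewrite -[2%R]/(1 + 1)%R lerD ?sqr_natr_sub_le1.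
Qed.

Lemma consecutive_close_sorted (R : rcfType) (ps : seq point) :
  sorted king_adj ps -> consecutive_close R ps.
Proof. by move/(sortedP (0, 0)) => adj_ps k /adj_ps /dist2_le_sqrt2. Qed.

Section SortedSeq.

Variables (T : Type) (r : rel T).

Lemma sorted_rev_sym (s : seq T) : symmetric r -> sorted r (rev s) = sorted r s.
Proof. by move=> r_sym; rewrite rev_sorted; case: s => //= x s; apply: eq_path. Qed.

Variable x0 : T.

Lemma path_flatten (x : T) (ss : seq (seq T)) :
  all (fun s => ~~ nilp s) ss -> all (sorted r) ss ->
  path (fun s t => r (last x0 s) (head x0 t)) [:: x] ss -> path r x (flatten ss).
Proof.
elim: ss x => [|[|y t] ss IH] x //= ne_ss /andP[sorted_yt sorted_ss] /andP[xy linked_ss].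
rewrite xy cat_path sorted_yt /=.
by apply: IH; last by case: ss linked_ss {ne_ss sorted_ss}.
Qed.

Lemma sorted_flatten (ss : seq (seq T)) :
  all (fun s => ~~ nilp s) ss -> all (sorted r) ss ->
  sorted (fun s t => r (last x0 s) (head x0 t)) ss -> sorted r (flatten ss).
Proof.
case: ss => [|[|y t] ss] //= ne_ss /andP[sorted_yt sorted_ss] linked_ss.
rewrite cat_path sorted_yt path_flatten //.
by case: ss linked_ss {ne_ss sorted_ss}.
Qed.

End SortedSeq.

Lemma sorted_iota (e : rel nat) (m n : nat) :
  (forall i, m <= i -> i.+1 < m + n -> e i i.+1) -> sorted e (iota m n).
Proof.
move=> e_succ; apply/(sortedP 0) => i; rewrite size_iota => lt_in.
have lt_i : i < n := ltnW lt_in.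
by rewrite !nth_iota // addnS; apply: e_succ; lia.
Qed.

Lemma last_iota (m n : nat) : last m (iota m.+1 n) = m + n.
Proof. by rewrite (last_nth 0) size_iota -/(iota m n.+1) nth_iota. Qed.

Lemma head_rev (T : Type) (x0 : T) (s : seq T) : head x0 (rev s) = last x0 s.
Proof. by case/lastP: s => [|s y] //; rewrite rev_rcons last_rcons. Qed.

Lemma last_rev (T : Type) (x0 : T) (s : seq T) : last x0 (rev s) = head x0 s.
Proof. by case: s => [|y s] //; rewrite rev_cons last_rcons. Qed.

Lemma imin_le_imax (H W s : nat) : 0 < H -> 0 < W -> s < H + W - 1 ->
  imin W s <= imax H s.
Proof. by rewrite /imin /imax; lia. Qed.

Lemma irangeE (H W s : nat) : 0 < H -> 0 < W -> s < H + W - 1 ->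
  irange H W s = iota (imin W s) (imax H s - imin W s).+1.
Proof. by move=> H_gt0 W_gt0 lt_s; rewrite /irange subSn ?imin_le_imax. Qed.

Section Zigzag.

Variables (T : Type) (r : rel T) (H W : nat) (g : nat -> nat -> T).
Hypotheses (r_sym : symmetric r) (H_gt0 : 0 < H) (W_gt0 : 0 < W).

Definition line (s : nat) : seq T := [seq g s i | i <- irange H W s].

Definition zigzag_block (s : nat) : seq T :=
  if odd s then rev (line s) else line s.

Definition entry_row (s : nat) : nat := if odd s then imax H s else imin W s.
Definition exit_row (s : nat) : nat := if odd s then imin W s else imax H s.

Hypothesis r_step : forall s i, s < H + W - 1 ->
  imin W s <= i < imax H s -> r (g s i) (g s i.+1).
Hypothesis r_turn : forall s, s.+1 < H + W - 1 ->
  r (g s (exit_row s)) (g s.+1 (entry_row s.+1)).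

Section Block.

Variables (s : nat) (x0 : T).
Hypothesis lt_s : s < H + W - 1.

Lemma zigzag_block_nonnil : ~~ nilp (zigzag_block s).
Proof. by rewrite /zigzag_block /line irangeE //; case: odd; rewrite ?rev_nilp. Qed.

Lemma sorted_zigzag_block : sorted r (zigzag_block s).
Proof.
rewrite /zigzag_block fun_if sorted_rev_sym // if_same /line sorted_map irangeE //.
by apply: sorted_iota => i le_i lt_i; apply: r_step => //; lia.
Qed.

Lemma head_zigzag_block : head x0 (zigzag_block s) = g s (entry_row s).
Proof.
rewrite /zigzag_block /entry_row /line irangeE //.
by case: odd; rewrite ?head_rev //= last_map last_iota subnKC ?imin_le_imax.
Qed.

Lemma last_zigzag_block : last x0 (zigzag_block s) = g s (exit_row s).
Proof.
rewrite /zigzag_block /exit_row /line irangeE //.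
by case: odd; rewrite ?last_rev //= last_map last_iota subnKC ?imin_le_imax.
Qed.

End Block.

Lemma sorted_zigzag :
  sorted r (flatten [seq zigzag_block s | s <- iota 0 (H + W - 1)]).
Proof.
apply: (sorted_flatten (x0 := g 0 0)).
- by rewrite all_map; apply/allP => s; rewrite mem_iota => lt_s; apply: zigzag_block_nonnil.
- by rewrite all_map; apply/allP => s; rewrite mem_iota => lt_s; apply: sorted_zigzag_block.
rewrite sorted_map; apply: sorted_iota => s _ lt_s /=.
by rewrite head_zigzag_block ?last_zigzag_block ?r_turn //; lia.
Qed.

End Zigzag.

Lemma sorted_p_diag (H W : nat) : 0 < H -> 0 < W -> sorted king_adj (p_diag H W).
Proof.
move=> H_gt0 W_gt0.
apply: (sorted_zigzag (g := fun s i => (i, s - i)) king_adj_sym H_gt0 W_gt0).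
- by move=> s i _; rewrite /king_adj /imin /imax /=; lia.
- by move=> s _; rewrite /exit_row /entry_row /king_adj /imin /imax /=; case: odd => /=; lia.
Qed.

Lemma sorted_p_antidiag (H W : nat) : 0 < H -> 0 < W ->
  sorted king_adj (p_antidiag H W).
Proof.
move=> H_gt0 W_gt0.
apply: (sorted_zigzag (g := fun s i => (i, W - 1 - (s - i))) king_adj_sym H_gt0 W_gt0).
- by move=> s i _; rewrite /king_adj /imin /imax /=; lia.
- by move=> s _; rewrite /exit_row /entry_row /king_adj /imin /imax /=; case: odd => /=; lia.
Qed.

Theorem mainTheorem2 (R : rcfType) (H W : nat) :
  (1 <= H)%N -> (1 <= W)%N ->
  consecutive_close R (p_diag H W) /\
  consecutive_close R (p_antidiag H W) /\
  consecutive_close R (rev (p_diag H W)) /\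
  consecutive_close R (rev (p_antidiag H W)).
Proof.
move=> H_gt0 W_gt0.
have diag_sorted := sorted_p_diag H_gt0 W_gt0.
have antidiag_sorted := sorted_p_antidiag H_gt0 W_gt0.
by split; [|split; [|split]]; apply: consecutive_close_sorted;
  rewrite ?sorted_rev_sym //; apply: king_adj_sym.
Qed.
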